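(* Let $n,m$ be integers with either $m=n-1\geq 0$ or $m=n-2\geq 0$, and let $H(s)=Q_{nm}(s)/P_{nm}(s)$ be the $(n,m)$ Padé approximant of $e^{-s}$. Then $H$ yields a maximally flat delay approximation of order $m+1$: its group delay satisfies $$t_d(\omega)=1+c\,\omega^{2(m+1)}+O(\omega^{2m+4})\quad(\omega\to 0)$$ for some constant $c\neq 0$.
   Context: The $(n,m)$ Padé approximant of $e^{-s}$ is $Q_{nm}(s)/P_{nm}(s)$ with $Q_{nm}(s)=\frac{n!}{(n+m)!}\sum_{k=0}^{m}\binom{m}{k}\frac{(n+k)!}{n!}(-s)^{m-k}$ and $P_{nm}(s)=\frac{m!}{(n+m)!}\sum_{k=0}^{n}\binom{n}{k}\frac{(m+k)!}{m!}s^{n-k}$ (equivalently, the unique rational function with $\deg Q\le m$, $\deg P\le n$, $P(0)=1$, $P(s)e^{-s}-Q(s)=O(s^{n+m+1})$). For a real rational function $H$, its group delay is $t_d(\omega)=-\frac{d}{d\omega}\arg H(j\omega)$, an even function of $\omega$. A delay approximation of unit delay is called maximally flat of order $k$ if, apart from the constant term $1$, the Taylor expansion of $t_d(\omega)$ about $\omega=0$ begins with the term in $\omega^{2k}$. *)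

From Stdlib Require Import Reals Factorial Binomial.
Open Scope R_scope.

Definition Cx : Type := (R * R)%type.

Definition Cadd (z w : Cx) : Cx := (fst z + fst w, snd z + snd w).
Definition Cmul (z w : Cx) : Cx :=
  (fst z * fst w - snd z * snd w, fst z * snd w + snd z * fst w).
Definition Copp (z : Cx) : Cx := (- fst z, - snd z).
Definition Cscale (r : R) (z : Cx) : Cx := (r * fst z, r * snd z).
Fixpoint Cpow (z : Cx) (k : nat) : Cx :=
  match k with O => (1, 0) | S k' => Cmul z (Cpow z k') end.
Definition Cnorm (z : Cx) : R := sqrt (fst z ^ 2 + snd z ^ 2).
Definition Cdiv (z w : Cx) : Cx :=
  Cscale (/ (fst w ^ 2 + snd w ^ 2)) (Cmul z (fst w, - snd w)).

Fixpoint Csum (f : nat -> Cx) (N : nat) : Cx :=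
  match N with O => f O | S N' => Cadd (Csum f N') (f (S N')) end.

Definition jw (w : R) : Cx := (0, w).

Definition pade_Q (n m : nat) (s : Cx) : Cx :=
  Cscale (INR (fact n) / INR (fact (n + m)))
    (Csum (fun k => Cscale (C m k * INR (fact (n + k)) / INR (fact n))
                           (Cpow (Copp s) (m - k))) m).

Definition pade_P (n m : nat) (s : Cx) : Cx :=
  Cscale (INR (fact m) / INR (fact (n + m)))
    (Csum (fun k => Cscale (C n k * INR (fact (m + k)) / INR (fact m))
                           (Cpow s (n - k))) n).

Definition pade_H (n m : nat) (s : Cx) : Cx := Cdiv (pade_Q n m s) (pade_P n m s).

Definition arg_branch (f : R -> Cx) (theta : R -> R) (delta : R) : Prop :=
  forall w, - delta < w < delta ->
    0 < Cnorm (f w) /\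
    fst (f w) = Cnorm (f w) * cos (theta w) /\
    snd (f w) = Cnorm (f w) * sin (theta w) /\
    exists d, derivable_pt_lim theta w d.

From Stdlib Require Import Reals Factorial Binomial Lra Lia.
From mathcomp Require Import all_boot all_order all_algebra.
From mathcomp Require Import Rstruct complex zify.
From mathcomp Require ring.
Import GRing.Theory Num.Theory.
Open Scope R_scope.

(* Up to the positive factor [1/|P(jw)|^2], [H(jw)] equals
   [G(w) = Q(jw) P(-jw)], so any differentiable branch [theta] of its argument
   satisfies [theta' |G|^2 = Re G Im G' - Im G Re G'], and [|G| = |S(jw)|] for
   [S = Q P].  The Padé polynomials solve the confluent hypergeometric equations
   [s y'' - (n+m) y' + s y' - m y = 0] (for [Q]) and
   [s y'' - (n+m) y' - s y' + n y = 0] (for [P]), which force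
   [W = Q'P - QP' + QP] to satisfy [s W' = (n+m) W], i.e. [W = K s^(n+m)] with
   [K] the product of the leading coefficients.  Hence
     [(1 - t_d(w)) |S(jw)|^2 = K Re(conj S(jw) (jw)^(n+m))].
   As [S(0) = 1] and [S'(0) = (n-m)/(n+m)], the right-hand side is
   [K (-1)^(m+1) w^(2m+2) + O(w^(2m+4))] if [n = m+2], and
   [K (-1)^m w^(2m+2) / (2m+1) + O(w^(2m+4))] if [n = m+1]. *)

(* Coefficients of [s^i] in [Q_{nm}] and [P_{nm}], read off the summand of
   index [k = m - i] (resp. [n - i]) of [pade_Q] (resp. [pade_P]). *)
Definition Qcoef (n m i : nat) : R :=
  if (i <= m)%N then (-1) ^ i * (INR (fact n) / INR (fact (n + m)) *
     (C m (m - i) * INR (fact (n + (m - i))) / INR (fact n))) else 0.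

Definition Pcoef (n m i : nat) : R :=
  if (i <= n)%N then INR (fact m) / INR (fact (n + m)) *
     (C n (n - i) * INR (fact (m + (n - i))) / INR (fact m)) else 0.

Lemma INR_fact_pred k : (0 < k)%N -> INR (fact k) = INR k * INR (fact (k - 1)).
Proof.
intros Hk. destruct k as [|k]; [lia|].
replace (S k - 1)%N with k by lia. apply mult_INR.
Qed.

Lemma Qcoef_closed n m i : (i <= m)%N -> Qcoef n m i =
  (-1) ^ i * (INR (fact m) * INR (fact (n + m - i)) /
     (INR (fact (n + m)) * INR (fact i) * INR (fact (m - i)))).
Proof.
intros Hi. unfold Qcoef, C. rewrite ifT; [|lia]. change Nat.sub with subn.
replace (m - (m - i))%N with i by lia.
replace (n + (m - i))%N with (n + m - i)%N by lia.
pose proof (INR_fact_neq_0 n). pose proof (INR_fact_neq_0 i).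
pose proof (INR_fact_neq_0 (m - i)). pose proof (INR_fact_neq_0 (n + m)).
field. auto.
Qed.

Lemma Pcoef_closed n m i : (i <= n)%N -> Pcoef n m i =
  INR (fact n) * INR (fact (n + m - i)) /
     (INR (fact (n + m)) * INR (fact i) * INR (fact (n - i))).
Proof.
intros Hi. unfold Pcoef, C. rewrite ifT; [|lia]. change Nat.sub with subn.
replace (n - (n - i))%N with i by lia.
replace (m + (n - i))%N with (n + m - i)%N by lia.
pose proof (INR_fact_neq_0 m). pose proof (INR_fact_neq_0 i).
pose proof (INR_fact_neq_0 (n - i)). pose proof (INR_fact_neq_0 (n + m)).
field. auto.
Qed.

Lemma Qcoef_out n m i : (m < i)%N -> Qcoef n m i = 0.
Proof. intros Hi. unfold Qcoef. rewrite ifF; [reflexivity|lia]. Qed.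

Lemma Pcoef_out n m i : (n < i)%N -> Pcoef n m i = 0.
Proof. intros Hi. unfold Pcoef. rewrite ifF; [reflexivity|lia]. Qed.

Lemma Qcoef0 n m : Qcoef n m 0 = 1.
Proof.
rewrite Qcoef_closed; [|lia]. rewrite !subn0. simpl.
pose proof (INR_fact_neq_0 m). pose proof (INR_fact_neq_0 (n + m)). field. auto.
Qed.

Lemma Pcoef0 n m : Pcoef n m 0 = 1.
Proof.
rewrite Pcoef_closed; [|lia]. rewrite !subn0. simpl.
pose proof (INR_fact_neq_0 n). pose proof (INR_fact_neq_0 (n + m)). field. auto.
Qed.

Lemma Qcoef_lead_neq0 n m : Qcoef n m m <> 0.
Proof.
rewrite Qcoef_closed; [|lia].
pose proof (INR_fact_neq_0 m). pose proof (INR_fact_neq_0 (n + m - m)).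
pose proof (INR_fact_neq_0 (n + m)). pose proof (INR_fact_neq_0 (m - m)).
pose proof (pow_nonzero (-1) m ltac:(lra)).
unfold Rdiv. repeat first [ assumption | apply Rmult_integral_contrapositive_currified
  | apply Rinv_neq_0_compat ].
Qed.

Lemma Pcoef_lead_neq0 n m : Pcoef n m n <> 0.
Proof.
rewrite Pcoef_closed; [|lia].
pose proof (INR_fact_neq_0 n). pose proof (INR_fact_neq_0 (n + m - n)).
pose proof (INR_fact_neq_0 (n + m)). pose proof (INR_fact_neq_0 (n - n)).
unfold Rdiv. repeat first [ assumption | apply Rmult_integral_contrapositive_currified
  | apply Rinv_neq_0_compat ].
Qed.

Lemma Qcoef_rec n m k :
  INR (k + 1) * (INR k - INR (n + m)) * Qcoef n m (k + 1) + (INR k - INR m) * Qcoef n m k = 0.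
Proof.
destruct (Nat.lt_trichotomy k m) as [Hk|[->|Hk]].
- rewrite (Qcoef_closed n m k) ?(Qcoef_closed n m (k + 1)); try lia.
  rewrite (INR_fact_pred (n + m - k)) ?(INR_fact_pred (m - k)) ?(INR_fact_pred (k + 1)); try lia.
  replace (n + m - k - 1)%N with (n + m - (k + 1))%N by lia.
  replace (m - k - 1)%N with (m - (k + 1))%N by lia.
  replace (k + 1 - 1)%N with k by lia.
  rewrite (minus_INR (n + m) k) ?(minus_INR m k) ?plus_INR; try lia. simpl INR.
  assert (INR k < INR m) by (apply lt_INR; lia).
  assert (INR m <= INR (n + m)) by (apply le_INR; lia).
  pose proof (INR_fact_neq_0 k). pose proof (INR_fact_neq_0 (n + m)).
  pose proof (INR_fact_neq_0 (m - (k + 1))). pose proof (INR_fact_neq_0 (n + m - (k + 1))).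
  pose proof (pos_INR k).
  rewrite pow_add. field. repeat split; lra.
- rewrite Qcoef_out; [ring|lia].
- rewrite !Qcoef_out; [ring|lia|lia].
Qed.

Lemma Pcoef_rec n m k :
  INR (k + 1) * (INR k - INR (n + m)) * Pcoef n m (k + 1) + (INR n - INR k) * Pcoef n m k = 0.
Proof.
destruct (Nat.lt_trichotomy k n) as [Hk|[->|Hk]].
- rewrite (Pcoef_closed n m k) ?(Pcoef_closed n m (k + 1)); try lia.
  rewrite (INR_fact_pred (n + m - k)) ?(INR_fact_pred (n - k)) ?(INR_fact_pred (k + 1)); try lia.
  replace (n + m - k - 1)%N with (n + m - (k + 1))%N by lia.
  replace (n - k - 1)%N with (n - (k + 1))%N by lia.
  replace (k + 1 - 1)%N with k by lia.
  rewrite (minus_INR (n + m) k) ?(minus_INR n k) ?plus_INR; try lia. simpl INR.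
  assert (INR k < INR n) by (apply lt_INR; lia).
  assert (INR n <= INR (n + m)) by (apply le_INR; lia).
  pose proof (INR_fact_neq_0 k). pose proof (INR_fact_neq_0 (n + m)).
  pose proof (INR_fact_neq_0 (n - (k + 1))). pose proof (INR_fact_neq_0 (n + m - (k + 1))).
  pose proof (pos_INR k).
  field. repeat split; lra.
- rewrite Pcoef_out; [ring|lia].
- rewrite !Pcoef_out; [ring|lia|lia].
Qed.

Lemma IZR_N1 : IZR (-1) = (- 1)%R :> R.
Proof. by rewrite /IZR /IPR RoppE. Qed.

Definition RringE := (RplusE, RminusE, RmultE, RoppE, RinvE, RdivE, INRE, RpowE,
  R0E, R1E, IZR_N1).

Section EulerEquation.
Variable K : numDomainType.
Local Open Scope ring_scope.

Lemma euler_poly_monomial {p : {poly K}} {N} :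
  'X * p^`() = (N%:R)%:P * p -> p = (p`_N)%:P * 'X^N.
Proof.
move=> Ep; apply/polyP => k; rewrite coefCM coefXn.
case: eqP => [->|/eqP neNk]; first by rewrite mulr1.
rewrite mulr0.
have Ek : (k%:R - N%:R) * p`_k = 0.
  apply/eqP; rewrite mulrBl subr_eq0; apply/eqP.
  have := congr1 (fun q : {poly K} => q`_k) Ep; rewrite /= coefXM coefCM => <-.
  by case: k {neNk} => [|k] /=; rewrite ?mul0r // coef_deriv mulr_natl.
by move/eqP: Ek; rewrite mulf_eq0 subr_eq0 eqr_nat (negbTE neNk) => /eqP.
Qed.

End EulerEquation.

Section PadePolynomials.
Import mathcomp.algebra_tactics.ring.
Local Open Scope ring_scope.
Variables n m : nat.

Definition Qpoly : {poly R} := \poly_(i < m.+1) Qcoef n m i.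
Definition Ppoly : {poly R} := \poly_(i < n.+1) Pcoef n m i.

Lemma coef_Qpoly k : Qpoly`_k = Qcoef n m k.
Proof. by rewrite coef_poly; case: ltnP => // Hk; rewrite Qcoef_out. Qed.

Lemma coef_Ppoly k : Ppoly`_k = Pcoef n m k.
Proof. by rewrite coef_poly; case: ltnP => // Hk; rewrite Pcoef_out. Qed.

Lemma size_Qpoly : size Qpoly = m.+1.
Proof. by apply: size_poly_eq; apply/eqP; apply: Qcoef_lead_neq0. Qed.

Lemma size_Ppoly : size Ppoly = n.+1.
Proof. by apply: size_poly_eq; apply/eqP; apply: Pcoef_lead_neq0. Qed.

Lemma Qpoly_ode : 'X * Qpoly^`()^`() - ((n + m)%:R)%:P * Qpoly^`()
   + 'X * Qpoly^`() - (m%:R)%:P * Qpoly = 0.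
Proof.
apply/polyP => k; rewrite coef0 !coefD !coefN !coefXM !coefCM !coef_deriv !coef_Qpoly.
have := Qcoef_rec n m k; rewrite ?RringE => rec.
case: k rec => [|k] /= rec; first by rewrite -[RHS]rec addn1 /=; ring.
by rewrite ?coef_deriv ?coef_Qpoly -[RHS]rec !addn1; ring.
Qed.

Lemma Ppoly_ode : 'X * Ppoly^`()^`() - ((n + m)%:R)%:P * Ppoly^`()
   - 'X * Ppoly^`() + (n%:R)%:P * Ppoly = 0.
Proof.
apply/polyP => k; rewrite coef0 !coefD !coefN !coefXM !coefCM !coef_deriv !coef_Ppoly.
have := Pcoef_rec n m k; rewrite ?RringE => rec.
case: k rec => [|k] /= rec; first by rewrite -[RHS]rec addn1 /=; ring.
by rewrite ?coef_deriv ?coef_Ppoly -[RHS]rec !addn1; ring.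
Qed.

Definition pade_wronskian := Qpoly^`() * Ppoly - Qpoly * Ppoly^`() + Qpoly * Ppoly.

Lemma pade_wronskian_euler :
  'X * pade_wronskian^`() = ((n + m)%:R)%:P * pade_wronskian.
Proof.
apply/eqP; rewrite -subr_eq0; apply/eqP.
rewrite /pade_wronskian !derivD !derivN !derivM.
transitivity (('X * Qpoly^`()^`() - ((n + m)%:R)%:P * Qpoly^`()
   + 'X * Qpoly^`() - (m%:R)%:P * Qpoly) * Ppoly -
   Qpoly * ('X * Ppoly^`()^`() - ((n + m)%:R)%:P * Ppoly^`()
   - 'X * Ppoly^`() + (n%:R)%:P * Ppoly)).
  by rewrite !natrD !polyCD; ring.
by rewrite Qpoly_ode Ppoly_ode; ring.
Qed.

Lemma pade_wronskianE :
  pade_wronskian = (Qcoef n m m * Pcoef n m n)%:P * 'X^(n + m).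
Proof.
rewrite {1}(euler_poly_monomial _ pade_wronskian_euler); congr (_%:P * _).
have Q0 : Qpoly != 0 by rewrite -size_poly_gt0 size_Qpoly.
have P0 : Ppoly != 0 by rewrite -size_poly_gt0 size_Ppoly.
have sQ' : (size Qpoly^`() <= m)%N by have := lt_size_deriv Q0; rewrite size_Qpoly.
have sP' : (size Ppoly^`() <= n)%N by have := lt_size_deriv P0; rewrite size_Ppoly.
rewrite /pade_wronskian !coefD coefN.
rewrite (nth_default 0 (_ : size (Qpoly^`() * Ppoly)%R <= n + m)%N); last first.
  by apply: leq_trans (size_polyMleq _ _) _; rewrite size_Ppoly; lia.
rewrite (nth_default 0 (_ : size (Qpoly * Ppoly^`())%R <= n + m)%N); last first.
  by apply: leq_trans (size_polyMleq _ _) _; rewrite size_Qpoly; lia.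
have -> : (n + m = (size (Qpoly * Ppoly)%R).-1)%N.
  by rewrite size_mul // size_Qpoly size_Ppoly; lia.
rewrite -lead_coefE lead_coefM /Qpoly /Ppoly !lead_coef_poly ?subr0 ?add0r //.
  by apply/eqP; apply: Pcoef_lead_neq0.
by apply/eqP; apply: Qcoef_lead_neq0.
Qed.

Lemma coef0_QP : (Qpoly * Ppoly)`_0 = 1.
Proof. by rewrite coef0M coef_Qpoly coef_Ppoly Qcoef0 Pcoef0 mulr1. Qed.

Lemma coef1_QP : (Qpoly * Ppoly)`_1 * (n + m)%:R = n%:R - m%:R.
Proof.
rewrite coefM !big_ord_recr big_ord0 /= !coef_Qpoly !coef_Ppoly Qcoef0 Pcoef0 subn0.
have := Qcoef_rec n m 0; have := Pcoef_rec n m 0.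
rewrite ?RringE !add0n Qcoef0 Pcoef0 /= => rp rq.
have E : (0 + 1 * Pcoef n m 1 + Qcoef n m 1 * 1) * (n + m)%:R - (n%:R - m%:R)
   = - (1%:R * (0 - (n + m)%:R) * Pcoef n m 1 + (n%:R - 0) * 1)
     - (1%:R * (0 - (n + m)%:R) * Qcoef n m 1 + (0 - m%:R) * 1) :> R by ring.
by apply/eqP; rewrite -subr_eq0 E rp rq subr0 oppr0.
Qed.

End PadePolynomials.

Section DilatePoly.
Context {A : comNzRingType}.
Local Open Scope ring_scope.

Definition dilate_poly (c : A) (p : {poly A}) : {poly A} :=
  \poly_(i < size p) (p`_i * c ^+ i).

Lemma coef_dilate_poly c p k : (dilate_poly c p)`_k = p`_k * c ^+ k.
Proof. by rewrite coef_poly; case: ltnP => // Hk; rewrite nth_default // mul0r. Qed.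

Lemma horner_dilate_poly c p x : (dilate_poly c p).[x] = p.[c * x].
Proof.
rewrite (horner_coef_wide _ (leqnn (size p))) (horner_coef_wide _ (size_poly _ _)).
by apply: eq_bigr => i _; rewrite coef_dilate_poly exprMn mulrA.
Qed.

Lemma deriv_dilate_poly c p : (dilate_poly c p)^`() = c%:P * dilate_poly c p^`().
Proof.
apply/polyP => k; rewrite coef_deriv coefCM !coef_dilate_poly coef_deriv exprS.
by rewrite mulrnAl mulrnAr mulrCA.
Qed.

End DilatePoly.

Section ComplexParts.
Import mathcomp.algebra_tactics.ring.
Context {K : rcfType}.
Local Open Scope ring_scope.

Lemma Re_add (x y : K[i]) : complex.Re (x + y) = complex.Re x + complex.Re y.
Proof. by case: x y => [a b] [c d]. Qed.

Lemma Im_add (x y : K[i]) : complex.Im (x + y) = complex.Im x + complex.Im y.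
Proof. by case: x y => [a b] [c d]. Qed.

Lemma Re_mul_real (x : K[i]) (r : K) : complex.Re (x * r%:C%C) = complex.Re x * r.
Proof. by case: x => [a b] /=; ring. Qed.

Lemma Im_mul_real (x : K[i]) (r : K) : complex.Im (x * r%:C%C) = complex.Im x * r.
Proof. by case: x => [a b] /=; ring. Qed.

Lemma Re_natmul (x : K[i]) k : complex.Re (x *+ k) = complex.Re x *+ k.
Proof. by elim: k => [|k IH] //; rewrite !mulrS Re_add IH. Qed.

Lemma Im_natmul (x : K[i]) k : complex.Im (x *+ k) = complex.Im x *+ k.
Proof. by elim: k => [|k IH] //; rewrite !mulrS Im_add IH. Qed.

Definition Re_poly (p : {poly K[i]}) : {poly K} := \poly_(i < size p) complex.Re p`_i.
Definition Im_poly (p : {poly K[i]}) : {poly K} := \poly_(i < size p) complex.Im p`_i.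

Lemma coef_Re_poly p k : (Re_poly p)`_k = complex.Re p`_k.
Proof. by rewrite coef_poly; case: ltnP => // Hk; rewrite nth_default. Qed.

Lemma coef_Im_poly p k : (Im_poly p)`_k = complex.Im p`_k.
Proof. by rewrite coef_poly; case: ltnP => // Hk; rewrite nth_default. Qed.

Lemma horner_Re_poly p (x : K) : (Re_poly p).[x] = complex.Re p.[x%:C%C].
Proof.
rewrite (horner_coef_wide _ (leqnn (size p))) (horner_coef_wide _ (size_poly _ _)).
rewrite (@big_morph _ _ (@complex.Re K) 0 +%R 0 +%R Re_add) //.
by apply: eq_bigr => i _; rewrite -rmorphXn Re_mul_real coef_Re_poly.
Qed.

Lemma horner_Im_poly p (x : K) : (Im_poly p).[x] = complex.Im p.[x%:C%C].
Proof.
rewrite (horner_coef_wide _ (leqnn (size p))) (horner_coef_wide _ (size_poly _ _)).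
rewrite (@big_morph _ _ (@complex.Im K) 0 +%R 0 +%R Im_add) //.
by apply: eq_bigr => i _; rewrite -rmorphXn Im_mul_real coef_Im_poly.
Qed.

Lemma deriv_Re_poly p : (Re_poly p)^`() = Re_poly p^`().
Proof. by apply/polyP => k; rewrite coef_deriv !coef_Re_poly coef_deriv Re_natmul. Qed.

Lemma deriv_Im_poly p : (Im_poly p)^`() = Im_poly p^`().
Proof. by apply/polyP => k; rewrite coef_deriv !coef_Im_poly coef_deriv Im_natmul. Qed.

Definition complex_poly (p : {poly K}) : {poly K[i]} := map_poly (real_complex K) p.

Lemma horner_complex_poly_conj p z :
  (complex_poly p).[z^*%C] = ((complex_poly p).[z])^*%C.
Proof.
rewrite -horner_map /=; congr horner.
by apply/polyP => k; rewrite /complex_poly !coef_map /= oppr0.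
Qed.

Lemma conj_iX (w : K) : ('i%C * w%:C%C)^*%C = - ('i%C * w%:C%C).
Proof. by congr Complex; rewrite /=; ring. Qed.

Lemma iX_exp_even (w : K) M :
  ('i%C * w%:C%C) ^+ (2 * M) = ((-1) ^+ M * w ^+ (2 * M))%:C%C.
Proof. by rewrite exprMn rmorphM rmorphXn rmorphN1 exprM sqr_i -rmorphXn. Qed.

Lemma iX_exp_odd (w : K) M :
  ('i%C * w%:C%C) ^+ (2 * M).+1 = 'i%C * ((-1) ^+ M * w ^+ (2 * M).+1)%:C%C.
Proof. by rewrite exprMn rmorphM rmorphXn rmorphN1 exprS exprM sqr_i -rmorphXn; ring. Qed.

Lemma Re_conj_mul_real (z : K[i]) (r : K) : complex.Re (z^*%C * r%:C%C) = complex.Re z * r.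
Proof. by case: z => [a b] /=; ring. Qed.

Lemma Re_conj_mul_ireal (z : K[i]) (r : K) :
  complex.Re (z^*%C * ('i%C * r%:C%C)) = complex.Im z * r.
Proof. by case: z => [a b] /=; ring. Qed.

End ComplexParts.

Section PadeOnImaginaryAxis.
Import mathcomp.algebra_tactics.ring.
Local Open Scope ring_scope.

Definition toC (z : Cx) : R[i] := Complex (fst z) (snd z).

Lemma toC_add z w : toC (Cadd z w) = toC z + toC w.
Proof. by case: z w => [a b] [c d]. Qed.

Lemma toC_mul z w : toC (Cmul z w) = toC z * toC w.
Proof. by case: z w => [a b] [c d]. Qed.

Lemma toC_opp z : toC (Copp z) = - toC z.
Proof. by case: z. Qed.

Lemma toC_scale r z : toC (Cscale r z) = r%:C%C * toC z.
Proof. by case: z => [a b]; congr Complex; rewrite /= ?RringE; ring. Qed.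

Lemma toC_pow z k : toC (Cpow z k) = toC z ^+ k.
Proof. by elim: k => [|k IH] //; rewrite /= toC_mul IH exprS. Qed.

Lemma toC_sum f N : toC (Csum f N) = \sum_(k < N.+1) toC (f k).
Proof.
elim: N => [|N IH]; first by rewrite big_ord1.
by rewrite /= toC_add IH [in RHS]big_ord_recr.
Qed.

Lemma toC_conj z : toC (fst z, - snd z) = (toC z)^*%C.
Proof. by case: z. Qed.

Lemma toC_jw w : toC (jw w) = 'i%C * w%:C%C.
Proof. by congr Complex; rewrite /= ?RringE; ring. Qed.

Lemma toC_pade_Q n m z : toC (pade_Q n m z) = (complex_poly (Qpoly n m)).[toC z].
Proof.
rewrite /pade_Q toC_scale toC_sum (horner_coef_wide _ (_ : size _ <= m.+1)%N); last first.
  by rewrite size_map_poly size_Qpoly.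
rewrite big_distrr /= (reindex_inj rev_ord_inj) /=; apply: eq_bigr => i _.
rewrite toC_scale toC_pow toC_opp coef_map /= coef_Qpoly.
have Hi := ltn_ord i; rewrite /Qcoef ifT; last by [].
change Nat.sub with subn; change Nat.add with addn.
have -> : (m.+1 - i.+1 = m - i)%N by lia.
have -> : (m - (m - i) = i)%N by lia.
rewrite ?RringE !rmorphM /= rmorphXn rmorphN1 exprNn; ring.
Qed.

Lemma toC_pade_P n m z : toC (pade_P n m z) = (complex_poly (Ppoly n m)).[toC z].
Proof.
rewrite /pade_P toC_scale toC_sum (horner_coef_wide _ (_ : size _ <= n.+1)%N); last first.
  by rewrite size_map_poly size_Ppoly.
rewrite big_distrr /= (reindex_inj rev_ord_inj) /=; apply: eq_bigr => i _.
rewrite toC_scale toC_pow coef_map /= coef_Ppoly.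
have Hi := ltn_ord i; rewrite /Pcoef ifT; last by [].
change Nat.sub with subn; change Nat.add with addn.
have -> : (n.+1 - i.+1 = n - i)%N by lia.
have -> : (n - (n - i) = i)%N by lia.
rewrite ?RringE !rmorphM /=; ring.
Qed.

Variables n m : nat.

Let Qc := complex_poly (Qpoly n m).
Let Pc := complex_poly (Ppoly n m).

(* [G(w) = Q(jw) P(-jw)], as a polynomial in the real variable [w]. *)
Definition phase_poly : {poly R[i]} := dilate_poly 'i%C (Qc * (Pc \Po - 'X)).

Definition QP_iX : {poly R[i]} := dilate_poly 'i%C (complex_poly (Qpoly n m * Ppoly n m)).

Definition wronskian_lead : R := Qcoef n m m * Pcoef n m n.

Lemma horner_phase_poly w :
  phase_poly.[w%:C%C] = Qc.['i%C * w%:C%C] * (Pc.['i%C * w%:C%C])^*%C.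
Proof.
by rewrite horner_dilate_poly hornerM horner_comp hornerN hornerX -conj_iX
  horner_complex_poly_conj.
Qed.

Lemma toC_phase w :
  toC (Cmul (pade_Q n m (jw w)) (fst (pade_P n m (jw w)), - snd (pade_P n m (jw w))))
  = phase_poly.[w%:C%C].
Proof. by rewrite toC_mul toC_conj toC_pade_Q toC_pade_P toC_jw horner_phase_poly. Qed.

Lemma horner_pade_wronskian z :
  (Qc^`() * Pc - Qc * Pc^`() + Qc * Pc).[z] = wronskian_lead%:C%C * z ^+ (n + m).
Proof.
have -> : Qc^`() * Pc - Qc * Pc^`() + Qc * Pc = complex_poly (pade_wronskian n m).
  by rewrite /pade_wronskian /complex_poly rmorphD rmorphB !rmorphM !deriv_map.
by rewrite pade_wronskianE /complex_poly rmorphM /= map_polyC map_polyXn hornerCM hornerXn.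
Qed.

(* The Wronskian identity [Q'P - QP' + QP = K s^(n+m)] read at [s = jw]. *)
Lemma phase_poly_identity w :
  let g1 := Re_poly phase_poly in let g2 := Im_poly phase_poly in
  g1.[w] * g2^`().[w] - g2.[w] * g1^`().[w] + g1.[w] ^+ 2 + g2.[w] ^+ 2
  = wronskian_lead * complex.Re ((QP_iX.[w%:C%C])^*%C * ('i%C * w%:C%C) ^+ (n + m)).
Proof.
rewrite /= !deriv_Re_poly !deriv_Im_poly !horner_Re_poly !horner_Im_poly.
rewrite /phase_poly deriv_dilate_poly hornerCM !horner_dilate_poly.
set z := 'i%C * w%:C%C.
have Ez : - z = z^*%C by rewrite conj_iX.
have Pc' : Pc^`() = complex_poly (Ppoly n m)^`() by rewrite /Pc /complex_poly deriv_map.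
rewrite derivM deriv_comp derivN derivX hornerD !hornerM !horner_comp hornerN hornerX.
rewrite hornerN -polyC1 hornerC Ez horner_complex_poly_conj Pc' horner_complex_poly_conj -Pc'.
have -> : wronskian_lead
     * complex.Re ((complex_poly (Qpoly n m * Ppoly n m)).[z]^*%C * z ^+ (n + m))
   = complex.Re ((Qc.[z] * Pc.[z])^*%C * (wronskian_lead%:C%C * z ^+ (n + m))).
  rewrite /complex_poly rmorphM hornerM -/Qc -/Pc.
  by case: (Qc.[z] * Pc.[z])^*%C (z ^+ (n + m)) => [a b] [c d] /=; ring.
rewrite -horner_pade_wronskian !hornerD hornerN !hornerM.
case: Qc.[z] Pc.[z] Qc^`().[z] Pc^`().[z] => [a1 a2] [b1 b2] [c1 c2] [d1 d2] /=; ring.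
Qed.

Lemma phase_poly_norm w :
  (Re_poly phase_poly).[w] ^+ 2 + (Im_poly phase_poly).[w] ^+ 2
  = (Re_poly QP_iX).[w] ^+ 2 + (Im_poly QP_iX).[w] ^+ 2.
Proof.
rewrite !horner_Re_poly !horner_Im_poly horner_phase_poly /QP_iX horner_dilate_poly.
rewrite /complex_poly rmorphM hornerM -/Qc -/Pc.
by case: Qc.['i%C * w%:C%C] Pc.['i%C * w%:C%C] => [a1 a2] [b1 b2] /=; ring.
Qed.

End PadeOnImaginaryAxis.

Lemma derivable_pt_lim_eq f g x l l' :
  (forall y, f y = g y) -> l = l' -> derivable_pt_lim f x l -> derivable_pt_lim g x l'.
Proof.
intros Hfg <- Hf. apply (derivable_pt_lim_locally_ext f g x (x - 1) (x + 1)); auto; lra.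
Qed.

Lemma derivable_pt_lim_horner (p : {poly R}) x :
  derivable_pt_lim (horner p) x (horner (deriv p) x).
Proof.
elim/poly_ind: p => [|p c IH].
- apply (derivable_pt_lim_eq (fun _ => 0) _ x 0); [intros; by rewrite horner0 |
    by rewrite deriv0 horner0 | apply derivable_pt_lim_const].
- eapply derivable_pt_lim_eq; [| | exact (derivable_pt_lim_plus _ _ x _ _
    (derivable_pt_lim_mult _ _ x _ _ IH (derivable_pt_lim_id x)) (derivable_pt_lim_const c x))].
  + intros y. rewrite hornerMXaddC. unfold plus_fct, mult_fct, Ranalysis1.id.
    by rewrite -RplusE -RmultE.
  + rewrite derivMXaddC hornerD hornerM hornerX -RplusE -RmultE. unfold Ranalysis1.id.
    by rewrite Rmult_1_r Rplus_0_r Rplus_comm.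
Qed.

Lemma Rabs_le_inv x a : Rabs x <= a -> - a <= x <= a.
Proof.
intros H. pose proof (Rle_abs x). pose proof (Rle_abs (- x)) as Hx. rewrite Rabs_Ropp in Hx. lra.
Qed.

Lemma horner_bounded (p : {poly R}) : exists C, 0 <= C /\
  forall w, Rabs w <= 1 -> Rabs (horner p w) <= C.
Proof.
elim/poly_ind: p => [|p c [C [HC IH]]].
- exists 0. split; [lra|]. intros w _. rewrite horner0 Rabs_R0. lra.
- exists (C + Rabs c). split; [pose proof (Rabs_pos c); lra|].
  intros w Hw. rewrite hornerMXaddC -RmultE -RplusE.
  eapply Rle_trans; [apply Rabs_triang|]. rewrite Rabs_mult.
  pose proof (IH w Hw). pose proof (Rabs_pos w). pose proof (Rabs_pos (horner p w)). nra.
Qed.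

Lemma horner_low_order (p : {poly R}) k : (forall i, (i < k)%N -> nth 0 p i = 0) ->
  exists C, 0 <= C /\ forall w, Rabs w <= 1 -> Rabs (horner p w) <= C * Rabs w ^ k.
Proof.
intros Hp.
assert (Ht : take_poly k p = 0%R).
{ apply/polyP => i. rewrite coef_take_poly coef0. case: ifP => // /Hp //. }
pose proof (poly_take_drop k p) as E. rewrite Ht add0r in E.
destruct (horner_bounded (drop_poly k p)) as [C [HC HB]].
exists C. split; [exact HC|]. intros w Hw.
rewrite -E hornerM hornerXn -RpowE -RmultE Rabs_mult -(RPow_abs w k).
apply Rmult_le_compat_r; [apply pow_le, Rabs_pos | auto].
Qed.

(* [g1 sin theta - g2 cos theta] vanishes near [w], hence so does its derivative. *)
Lemma polar_angle_derivative (g1 g2 theta : R -> R) a b w dg1 dg2 d :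
  a < w < b ->
  (forall t, a < t < b ->
     exists rho, g1 t = rho * cos (theta t) /\ g2 t = rho * sin (theta t)) ->
  derivable_pt_lim g1 w dg1 -> derivable_pt_lim g2 w dg2 -> derivable_pt_lim theta w d ->
  d * (g1 w ^ 2 + g2 w ^ 2) = g1 w * dg2 - g2 w * dg1.
Proof.
intros Hw Hpolar H1 H2 Hd.
set h := fun t => g1 t * sin (theta t) - g2 t * cos (theta t).
assert (Hh : derivable_pt_lim h w (dg1 * sin (theta w) + g1 w * (cos (theta w) * d)
   - (dg2 * cos (theta w) + g2 w * (- sin (theta w) * d)))).
{ apply (derivable_pt_lim_minus (fun t => g1 t * sin (theta t))
    (fun t => g2 t * cos (theta t))).
  - apply (derivable_pt_lim_mult g1 (fun t => sin (theta t))); [exact H1|].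
    apply (derivable_pt_lim_comp theta sin); [exact Hd | apply derivable_pt_lim_sin].
  - apply (derivable_pt_lim_mult g2 (fun t => cos (theta t))); [exact H2|].
    apply (derivable_pt_lim_comp theta cos); [exact Hd | apply derivable_pt_lim_cos]. }
assert (H0 : derivable_pt_lim h w 0).
{ apply (derivable_pt_lim_locally_ext (fun _ => 0) h w a b 0 Hw);
    [|apply derivable_pt_lim_const].
  intros t Ht. unfold h. destruct (Hpolar t Ht) as [rho [-> ->]]. ring. }
pose proof (uniqueness_limite h w _ _ Hh H0) as E.
destruct (Hpolar w Hw) as [rho [E1 E2]]. rewrite E1 E2 in E |- *.
apply Rminus_diag_uniq.
transitivity (rho * (dg1 * sin (theta w) + rho * cos (theta w) * (cos (theta w) * d)
   - (dg2 * cos (theta w) + rho * sin (theta w) * (- sin (theta w) * d)))); [ring|].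
rewrite E. ring.
Qed.

Lemma arg_branch_atan (f : R -> Cx) delta :
  (forall w, - delta < w < delta -> 0 < fst (f w) /\
     exists d, derivable_pt_lim (fun t => snd (f t) / fst (f t)) w d) ->
  arg_branch f (fun w => atan (snd (f w) / fst (f w))) delta.
Proof.
intros Hf w Hw. destruct (Hf w Hw) as [Hpos [d Hd]].
set t := snd (f w) / fst (f w).
assert (Hs : 0 < sqrt (1 + t²)) by (apply sqrt_lt_R0; pose proof (Rle_0_sqr t); lra).
assert (Hnorm : Cnorm (f w) = fst (f w) * sqrt (1 + t²)).
{ unfold Cnorm. rewrite <- (sqrt_pow2 (fst (f w))) at 2; [|lra].
  rewrite <- sqrt_mult; [|apply pow2_ge_0 | pose proof (Rle_0_sqr t); lra].
  f_equal. unfold t, Rsqr. field. lra. }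
rewrite Hnorm cos_atan sin_atan.
repeat split.
- apply Rmult_lt_0_compat; lra.
- field; lra.
- unfold t in *. field. split; lra.
- eexists. apply (derivable_pt_lim_comp (fun t => snd (f t) / fst (f t)) atan);
    [exact Hd | apply derivable_pt_lim_atan].
Qed.

Lemma small_Rabs_bounds C w : 0 <= C -> Rabs w < / (2 * C + 2) ->
  Rabs w <= 1 /\ C * Rabs w <= 1/2.
Proof.
intros HC Hw. assert (Hd : / (2 * C + 2) * (2 * C + 2) = 1) by (field; lra).
pose proof (Rabs_pos w).
assert (Rabs w * (2 * C + 2) < 1) by (rewrite <- Hd; apply Rmult_lt_compat_r; lra).
assert (0 <= C * Rabs w) by (apply Rmult_le_pos; lra).
split; lra.
Qed.

Lemma ratio_expansion e y s1 s2 t a x w C1 C2 C3 :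
  0 <= C1 -> Rabs w <= 1 -> C1 * Rabs w <= 1/2 ->
  Rabs (s1 - 1) <= C1 * Rabs w ^ 2 -> Rabs s2 <= C2 * Rabs w ->
  Rabs (t - a * x) <= C3 * Rabs x * Rabs w ^ 2 ->
  e * (s1 ^ 2 + s2 ^ 2) = y * t ->
  Rabs (e - y * (a * x))
    <= 4 * (C3 + Rabs a * (3 * C1 + C2 ^ 2)) * Rabs y * Rabs x * Rabs w ^ 2.
Proof.
intros HC1 Hw1 Hw HB1 HB2 HBt He.
pose proof (Rabs_pos w). pose proof (Rabs_pos x). pose proof (Rabs_pos a).
pose proof (Rabs_pos y). pose proof (Rabs_pos s2). pose proof (pow2_ge_0 (Rabs w)).
assert (Hs1 : - (1/2) <= s1 - 1 <= 1/2).
{ apply Rabs_le_inv. assert (0 <= C1 * Rabs w) by (apply Rmult_le_pos; lra).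
  assert (C1 * Rabs w ^ 2 <= C1 * Rabs w) by (simpl; nra). lra. }
set D := s1 ^ 2 + s2 ^ 2 in He.
assert (HD : 1/4 <= D) by (unfold D; nra).
assert (HD1 : Rabs (D - 1) <= (3 * C1 + C2 ^ 2) * Rabs w ^ 2).
{ replace (D - 1) with ((s1 - 1) * (s1 + 1) + s2 * s2) by (unfold D; ring).
  eapply Rle_trans; [apply Rabs_triang|]. rewrite !Rabs_mult.
  assert (Rabs (s1 + 1) <= 3) by (apply Rabs_le; lra).
  assert (Rabs s2 * Rabs s2 <= C2 ^ 2 * Rabs w ^ 2) by (simpl; nra).
  pose proof (Rabs_pos (s1 - 1)). pose proof (Rabs_pos (s1 + 1)). nra. }
clearbody D.
assert (Hq : e = y * t / D)
  by (apply (Rmult_eq_reg_r D); [rewrite He; field|]; lra).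
replace (e - y * (a * x)) with (y * ((t - a * x) - a * x * (D - 1)) / D)
  by (rewrite Hq; field; lra).
unfold Rdiv. rewrite !Rabs_mult (Rabs_inv D) (Rabs_pos_eq D); [|lra].
assert (Hinv : 0 < / D <= 4).
{ split; [apply Rinv_0_lt_compat; lra|].
  rewrite <- (Rinv_inv 4). apply Rinv_le_contravar; lra. }
assert (HN : Rabs ((t - a * x) - a * x * (D - 1))
   <= (C3 + Rabs a * (3 * C1 + C2 ^ 2)) * Rabs x * Rabs w ^ 2).
{ unfold Rminus at 1. eapply Rle_trans; [apply Rabs_triang|].
  rewrite Rabs_Ropp !Rabs_mult. pose proof (Rabs_pos (D - 1)).
  assert (Rabs a * Rabs x * Rabs (D - 1)
    <= Rabs a * Rabs x * ((3 * C1 + C2 ^ 2) * Rabs w ^ 2))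
    by (apply Rmult_le_compat_l; [apply Rmult_le_pos|]; lra).
  nra. }
pose proof (Rabs_pos ((t - a * x) - a * x * (D - 1))).
assert (Rabs ((t - a * x) - a * x * (D - 1)) * / D
  <= (C3 + Rabs a * (3 * C1 + C2 ^ 2)) * Rabs x * Rabs w ^ 2 * 4) by nra.
nra.
Qed.

Definition delay_expansion (f : R -> Cx) (c : R) (k : nat) : Prop :=
  forall delta theta, 0 < delta -> arg_branch f theta delta ->
  exists K delta1 : R, 0 < delta1 /\
    forall w d : R, Rabs w < delta1 -> Rabs w < delta -> derivable_pt_lim theta w d ->
      Rabs (- d - 1 - c * w ^ (2 * k)) <= K * Rabs w ^ (2 * k + 2).

Section PadeCoefficients.
Import mathcomp.algebra_tactics.ring.
Local Open Scope ring_scope.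
Variables n m : nat.

Lemma coef0_phase_poly : (phase_poly n m)`_0 = 1.
Proof.
rewrite coef_dilate_poly expr0 mulr1 -horner_coef0 hornerM horner_comp hornerN hornerX oppr0.
by rewrite !horner_coef0 !coef_map /= coef_Qpoly coef_Ppoly Qcoef0 Pcoef0 mulr1.
Qed.

Lemma coef_QP_iX k : (QP_iX n m)`_k = ((Qpoly n m * Ppoly n m)`_k)%:C%C * 'i%C ^+ k.
Proof. by rewrite coef_dilate_poly coef_map. Qed.

Lemma coef_Re_QP_iX_sub1 k : (k < 2)%N ->
  (Re_poly (QP_iX n m) - 1)`_k = 0.
Proof.
rewrite coefB coef_Re_poly coef_QP_iX coef1.
by case: k => [|[|k]] // _; rewrite /= ?coef0_QP; ring.
Qed.

Lemma coef_Im_QP_iX_subX k : (k < 3)%N ->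
  (Im_poly (QP_iX n m) - ((Qpoly n m * Ppoly n m)`_1)%:P * 'X)`_k = 0.
Proof.
rewrite coefB coef_Im_poly coef_QP_iX coefCM coefX.
by case: k => [|[|[|k]]] // _; rewrite /= ?coef0_QP; ring.
Qed.

Lemma coef_Re_phase_poly_sub1 k : (k < 1)%N -> (Re_poly (phase_poly n m) - 1)`_k = 0.
Proof. by case: k => // _; rewrite coefB coef_Re_poly coef0_phase_poly coef1 subrr. Qed.

Lemma coef_Im_QP_iX k : (k < 1)%N -> (Im_poly (QP_iX n m))`_k = 0.
Proof. by case: k => // _; rewrite coef_Im_poly coef_QP_iX coef0_QP expr0 mulr1. Qed.

Lemma wronskian_lead_neq0 : wronskian_lead n m <> 0.
Proof.
exact: Rmult_integral_contrapositive_currified (Qcoef_lead_neq0 n m) (Pcoef_lead_neq0 n m).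
Qed.

End PadeCoefficients.

Section PadeGroupDelay.
Variables n m : nat.

Let g1 : R -> R := horner (Re_poly (phase_poly n m)).
Let g2 : R -> R := horner (Im_poly (phase_poly n m)).
Let dg1 : R -> R := horner (deriv (Re_poly (phase_poly n m))).
Let dg2 : R -> R := horner (deriv (Im_poly (phase_poly n m))).
Let s1 : R -> R := horner (Re_poly (QP_iX n m)).
Let s2 : R -> R := horner (Im_poly (QP_iX n m)).

Lemma pade_phase_components w :
  Cmul (pade_Q n m (jw w)) (fst (pade_P n m (jw w)), - snd (pade_P n m (jw w)))
  = (g1 w, g2 w).
Proof.
unfold g1, g2. rewrite horner_Re_poly horner_Im_poly -toC_phase. apply surjective_pairing.
Qed.

Definition pade_scale w : R :=
  / (fst (pade_P n m (jw w)) ^ 2 + snd (pade_P n m (jw w)) ^ 2).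

Lemma pade_H_jw w : pade_H n m (jw w) = (pade_scale w * g1 w, pade_scale w * g2 w).
Proof. unfold pade_H, Cdiv, Cscale. rewrite pade_phase_components. reflexivity. Qed.

(* [pade_scale w] vanishes only through Rocq's convention [/ 0 = 0], that is
   when [P(jw) = 0], in which case [G(w) = 0] too. *)
Lemma pade_scale_pos w : g1 w <> 0 -> 0 < pade_scale w.
Proof.
intros Hg. pose proof (f_equal fst (pade_phase_components w)) as E.
unfold Cmul in E. cbn [fst snd] in E.
unfold pade_scale. set a := fst (pade_P n m (jw w)) in E |- *.
set b := snd (pade_P n m (jw w)) in E |- *.
destruct (Req_dec (a ^ 2 + b ^ 2) 0) as [H0|H0].
- exfalso. apply Hg. rewrite <- E.
  replace a with 0 by nra. replace b with 0 by nra. ring.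
- apply Rinv_0_lt_compat. nra.
Qed.

Lemma pade_branch_polar theta delta :
  arg_branch (fun w => pade_H n m (jw w)) theta delta ->
  forall t, - delta < t < delta ->
    exists rho, g1 t = rho * cos (theta t) /\ g2 t = rho * sin (theta t).
Proof.
intros Hb t Ht. destruct (Hb t Ht) as [Hn [Hc [Hs _]]].
rewrite pade_H_jw in Hn, Hc, Hs. cbn [fst snd] in Hc, Hs.
set N := Cnorm _ in Hn, Hc, Hs.
assert (Hr : pade_scale t <> 0).
{ intros Hr. unfold N, Cnorm in Hn. cbn [fst snd] in Hn. rewrite Hr in Hn.
  replace ((0 * g1 t) ^ 2 + (0 * g2 t) ^ 2) with 0 in Hn by ring.
  rewrite sqrt_0 in Hn. lra. }
exists (N / pade_scale t). split; apply (Rmult_eq_reg_l (pade_scale t)); auto.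
- rewrite Hc. field. exact Hr.
- rewrite Hs. field. exact Hr.
Qed.

Lemma pade_delay_identity theta delta w d :
  arg_branch (fun w => pade_H n m (jw w)) theta delta -> Rabs w < delta ->
  derivable_pt_lim theta w d ->
  (d + 1) * (s1 w ^ 2 + s2 w ^ 2)
  = g1 w * dg2 w - g2 w * dg1 w + g1 w ^ 2 + g2 w ^ 2.
Proof.
intros Hb Hw Hd. apply Rabs_def2 in Hw.
assert (Hnorm : g1 w ^ 2 + g2 w ^ 2 = s1 w ^ 2 + s2 w ^ 2)
  by (unfold g1, g2, s1, s2; rewrite !RpowE; apply phase_poly_norm).
rewrite <- Hnorm, Rmult_plus_distr_r, Rmult_1_l.
rewrite (polar_angle_derivative g1 g2 theta (- delta) delta w (dg1 w) (dg2 w) d);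
  [ring | lra | apply (pade_branch_polar theta delta Hb)
  | apply derivable_pt_lim_horner | apply derivable_pt_lim_horner | exact Hd].
Qed.

Section Parity.
Import mathcomp.algebra_tactics.ring.

Lemma pade_delay_identity_even M w : (n + m = 2 * M)%N ->
  g1 w * dg2 w - g2 w * dg1 w + g1 w ^ 2 + g2 w ^ 2
  = wronskian_lead n m * (-1) ^ M * w ^ (2 * M) * s1 w.
Proof.
move=> HN; rewrite /g1 /g2 /dg1 /dg2 /s1 ?RringE.
have := phase_poly_identity n m w; rewrite /= HN iX_exp_even Re_conj_mul_real => ->.
by rewrite horner_Re_poly; ring.
Qed.

Lemma pade_delay_identity_odd M w : (n + m = (2 * M).+1)%N ->
  g1 w * dg2 w - g2 w * dg1 w + g1 w ^ 2 + g2 w ^ 2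
  = wronskian_lead n m * (-1) ^ M * w ^ (2 * M).+1 * s2 w.
Proof.
move=> HN; rewrite /g1 /g2 /dg1 /dg2 /s2 ?RringE.
have := phase_poly_identity n m w; rewrite /= HN iX_exp_odd Re_conj_mul_ireal => ->.
by rewrite horner_Im_poly; ring.
Qed.

End Parity.

Lemma phase_re_expansion : exists C, 0 <= C /\
  forall w, Rabs w <= 1 -> Rabs (g1 w - 1) <= C * Rabs w ^ 1.
Proof.
destruct (horner_low_order _ 1 (coef_Re_phase_poly_sub1 n m)) as [C [HC HB]].
exists C. split; [exact HC|]. intros w Hw. specialize (HB w Hw).
rewrite hornerD hornerN -polyC1 hornerC in HB. exact HB.
Qed.

Lemma QP_re_expansion : exists C, 0 <= C /\
  forall w, Rabs w <= 1 -> Rabs (s1 w - 1) <= C * Rabs w ^ 2.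
Proof.
destruct (horner_low_order _ 2 (coef_Re_QP_iX_sub1 n m)) as [C [HC HB]].
exists C. split; [exact HC|]. intros w Hw. specialize (HB w Hw).
rewrite hornerD hornerN -polyC1 hornerC in HB. exact HB.
Qed.

Lemma QP_im_bound : exists C, forall w, Rabs w <= 1 -> Rabs (s2 w) <= C * Rabs w.
Proof.
destruct (horner_low_order _ 1 (coef_Im_QP_iX n m)) as [C [_ HB]].
exists C. intros w Hw. rewrite <- (pow_1 (Rabs w)). exact (HB w Hw).
Qed.

Lemma QP_im_expansion : exists C, forall w, Rabs w <= 1 ->
  Rabs (s2 w - ((Qpoly n m * Ppoly n m)`_1)%R * w) <= C * Rabs w ^ 3.
Proof.
destruct (horner_low_order _ 3 (coef_Im_QP_iX_subX n m)) as [C [_ HB]].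
exists C. intros w Hw. specialize (HB w Hw).
rewrite hornerD hornerN hornerCM hornerX in HB. exact HB.
Qed.

Lemma pade_arg_branch_exists : exists delta theta,
  0 < delta /\ arg_branch (fun w => pade_H n m (jw w)) theta delta.
Proof.
destruct phase_re_expansion as [C [HC HB]].
assert (Hdel : 0 < / (2 * C + 2)) by (apply Rinv_0_lt_compat; lra).
assert (Hg1 : forall w, - / (2 * C + 2) < w < / (2 * C + 2) -> 1/2 <= g1 w).
{ intros w Hw. destruct (small_Rabs_bounds C w HC) as [Hw1 Hw2]; [apply Rabs_def1; lra|].
  pose proof (Rabs_le_inv _ _ (HB w Hw1)) as Hb. rewrite pow_1 in Hb. lra. }
exists (/ (2 * C + 2)), (fun w => atan (snd (pade_H n m (jw w)) / fst (pade_H n m (jw w)))).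
split; [exact Hdel|]. apply arg_branch_atan. intros w Hw.
pose proof (Hg1 w Hw). pose proof (pade_scale_pos w ltac:(lra)).
rewrite pade_H_jw. cbn [fst snd]. split; [nra|]. eexists.
apply (derivable_pt_lim_locally_ext (fun t => g2 t / g1 t) _ w _ _ _ Hw).
- intros t Ht. rewrite pade_H_jw. cbn [fst snd].
  pose proof (Hg1 t Ht). pose proof (pade_scale_pos t ltac:(lra)). field. split; lra.
- apply (derivable_pt_lim_div g2 g1); [apply derivable_pt_lim_horner
  | apply derivable_pt_lim_horner | lra].
Qed.

Lemma pade_delay_expansion N k Kp (t x : R -> R) a :
  (forall w, g1 w * dg2 w - g2 w * dg1 w + g1 w ^ 2 + g2 w ^ 2 = Kp * w ^ N * t w) ->
  (exists C, forall w, Rabs w <= 1 -> Rabs (t w - a * x w) <= C * Rabs (x w) * Rabs w ^ 2) ->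
  (forall w, w ^ N * x w = w ^ (2 * k)) ->
  delay_expansion (fun w => pade_H n m (jw w)) (- (Kp * a)) k.
Proof.
intros Hrel [C3 HB3] Hx delta theta _ Hb.
destruct QP_re_expansion as [C1 [HC1 HB1]]. destruct QP_im_bound as [C2 HB2].
exists (4 * (C3 + Rabs a * (3 * C1 + C2 ^ 2)) * Rabs Kp), (/ (2 * C1 + 2)).
split; [apply Rinv_0_lt_compat; lra|].
intros w d Hw1 Hw Hd.
destruct (small_Rabs_bounds C1 w HC1 Hw1) as [Hw2 Hcw].
assert (He : (d + 1) * (s1 w ^ 2 + s2 w ^ 2) = Kp * w ^ N * t w)
  by (rewrite <- Hrel; exact (pade_delay_identity theta delta w d Hb Hw Hd)).
pose proof (ratio_expansion _ _ _ _ _ a (x w) w C1 C2 C3 HC1 Hw2 Hcw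
  (HB1 w Hw2) (HB2 w Hw2) (HB3 w Hw2) He) as Hr.
replace (- d - 1 - - (Kp * a) * w ^ (2 * k)) with (- (d + 1 - Kp * w ^ N * (a * x w)))
  by (rewrite <- Hx; ring).
assert (Hxw : Rabs (w ^ N) * Rabs (x w) = Rabs w ^ (2 * k))
  by (rewrite <- Rabs_mult, Hx, RPow_abs; reflexivity).
rewrite Rabs_Ropp. eapply Rle_trans; [exact Hr|].
right. rewrite Rabs_mult pow_add -Hxw. ring.
Qed.

End PadeGroupDelay.

Lemma pade_maximally_flat_odd m : exists c, c <> 0 /\
  delay_expansion (fun w => pade_H (m + 1) m (jw w)) c (m + 1).
Proof.
set S1 := ((Qpoly (m + 1) m * Ppoly (m + 1) m)`_1)%R.
assert (HS1 : S1 <> 0).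
{ intros H0. move: (coef1_QP (m + 1) m).
  rewrite -/S1 H0 mul0r natrD addrAC subrr add0r => /esym/eqP.
  by rewrite oner_eq0. }
exists (- (wronskian_lead (m + 1) m * (-1) ^ m * S1)). split.
- apply Ropp_neq_0_compat, Rmult_integral_contrapositive_currified;
    [apply Rmult_integral_contrapositive_currified|];
    [apply wronskian_lead_neq0 | apply pow_nonzero; lra | exact HS1].
- apply (pade_delay_expansion _ _ (2 * m).+1 _ _
    (horner (Im_poly (QP_iX (m + 1) m))) (fun w => w)).
  + intros w. apply pade_delay_identity_odd. lia.
  + destruct (QP_im_expansion (m + 1) m) as [C HB]. exists C. intros w Hw.
    replace (C * Rabs w * Rabs w ^ 2) with (C * Rabs w ^ 3) by ring. exact (HB w Hw).
  + intros w. rewrite <- (pow_1 w) at 2. rewrite <- pow_add. f_equal. lia.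
Qed.

Lemma pade_maximally_flat_even m : exists c, c <> 0 /\
  delay_expansion (fun w => pade_H (m + 2) m (jw w)) c (m + 1).
Proof.
exists (- (wronskian_lead (m + 2) m * (-1) ^ (m + 1) * 1)). split.
- apply Ropp_neq_0_compat, Rmult_integral_contrapositive_currified;
    [apply Rmult_integral_contrapositive_currified|];
    [apply wronskian_lead_neq0 | apply pow_nonzero | ]; lra.
- apply (pade_delay_expansion _ _ (2 * (m + 1)) _ _
    (horner (Re_poly (QP_iX (m + 2) m))) (fun _ => 1)).
  + intros w. apply pade_delay_identity_even. lia.
  + destruct (QP_re_expansion (m + 2) m) as [C [_ HB]]. exists C. intros w Hw.
    rewrite Rmult_1_r Rabs_R1 Rmult_1_r. exact (HB w Hw).
  + intros w. apply Rmult_1_r.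
Qed.

Theorem theorem4 (n m : nat) (Hnm : n = (m + 1)%nat \/ n = (m + 2)%nat) :
  (exists (delta : R) (theta : R -> R),
      0 < delta /\ arg_branch (fun w => pade_H n m (jw w)) theta delta) /\
  (exists c : R, c <> 0 /\
    forall (delta : R) (theta : R -> R),
      0 < delta -> arg_branch (fun w => pade_H n m (jw w)) theta delta ->
      exists K delta1 : R, 0 < delta1 /\
        forall w d : R, Rabs w < delta1 -> Rabs w < delta ->
          derivable_pt_lim theta w d ->
          Rabs ((- d) - 1 - c * w ^ (2 * (m + 1))) <= K * Rabs w ^ (2 * m + 4)).
Proof.
split; [apply pade_arg_branch_exists|].
replace (2 * m + 4)%nat with (2 * (m + 1) + 2)%nat by lia.
destruct Hnm as [-> | ->];
  [apply pade_maximally_flat_odd | apply pade_maximally_flat_even].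
Qed.
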